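(* Let $\mu$ be a partition of $n+k$ with $h$ rows and $l=\mu_1$ columns, and let $(i,j)$ be a cell of $\mu$. Let $\alpha_0,\dots,\alpha_{h-1}$ be distinct rational numbers and $\beta_0,\dots,\beta_{l-1}$ be distinct rational numbers. Let $\mathcal{T}$ be the set of fillings of the Ferrers diagram of $\mu$ in which $k$ cells of $S_\mu(i,j)$ are left white and the other $n$ cells contain the numbers $1,\dots,n$, each exactly once. To $T\in\mathcal{T}$ associate the point $(a(T),b(T))\in\mathbb{Q}^{2n}$ with $a_t(T)=\alpha_{r_t}$ and $b_t(T)=\beta_{c_t}$, where $(r_t,c_t)$ is the cell (row, column) containing $t$. Let $\rho^k$ be the set of these points, and $J_{\rho^k}\subseteq\mathbb{Q}[X_n,Y_n]$ the ideal of polynomials vanishing on $\rho^k$. Let $I^k=\mathrm{gr}\,J_{\rho^k}$ be the ideal generated by the highest-degree homogeneous components of elements of $J_{\rho^k}$. Then $$I^k\subseteq \bigcap_{(a_1,b_1),\dots,(a_k,b_k)} I_{\partial x_{n+1}^{a_1}\partial y_{n+1}^{b_1}\cdots\partial x_{n+k}^{a_k}\partial y_{n+k}^{b_k}\Delta_\mu}\ \cap\ \mathbb{Q}[X_n,Y_n],$$ where the intersection runs over all $k$-tuples of distinct cells of $S_\mu(i,j)$ in increasing order, and $\Delta_\mu=\Delta_\mu(X_{n+k},Y_{n+k})$.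
   Context: Write $X_m=(x_1,\dots,x_m)$ and $Y_m=(y_1,\dots,y_m)$. The Ferrers diagram of $\mu$ is $\{(a,b):0\le a\le h-1,\ 0\le b\le\mu_{a+1}-1\}$ ($a$ = row, $b$ = column). Cells are ordered by $(p,q)<(p',q')$ iff $q<q'$, or $q=q'$ and $p<p'$. For a lattice diagram with cells $(p_1,q_1)<\dots<(p_m,q_m)$, set $\Delta_L=\det(x_r^{p_t}y_r^{q_t})_{1\le r,t\le m}$. The shadow is $S_\mu(i,j)=\{(a,b)\in\mu:a\ge i,\ b\ge j\}$. For $R\in\mathbb{Q}[X_{n+k},Y_{n+k}]$, $I_R$ is the set of $P$ such that $P(\partial)Q=0$ for all partial derivatives $Q$ of $R$, where $P(\partial)$ substitutes $\partial/\partial x_r$ and $\partial/\partial y_r$ for $x_r$ and $y_r$. *)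

From mathcomp Require Import all_boot all_order all_algebra.
From mathcomp Require Import mpoly.
Unset Printing Implicit Defensive.
Import GRing.Theory.
Local Open Scope ring_scope.

(* Conventions.  N = n + k.  The ring Q[X_N, Y_N] is {mpoly rat[N + N]}:
   variable of index r < N is x_{r+1}, variable of index N + r is y_{r+1}. *)

Definition is_partition (mu : seq nat) : bool :=
  sorted geq mu && all (fun x => 0 < x)%N mu.

(* cell (a,b) = (row, column), 0-indexed, of the Ferrers diagram *)
Definition cell_in (mu : seq nat) (c : nat * nat) : bool :=
  (c.1 < size mu)%N && (c.2 < nth 0%N mu c.1)%N.

Definition cell_lt (c d : nat * nat) : bool :=
  (c.2 < d.2)%N || ((c.2 == d.2) && (c.1 < d.1)%N).

Definition cells (mu : seq nat) : seq (nat * nat) :=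
  filter (cell_in mu)
    [seq (a, b) | b <- iota 0 (head 0%N mu), a <- iota 0 (size mu)].

Definition shadow (mu : seq nat) (i j : nat) (c : nat * nat) : bool :=
  [&& cell_in mu c, (i <= c.1)%N & (j <= c.2)%N].

Definition Delta (N : nat) (mu : seq nat) : {mpoly rat[N + N]} :=
  \det (\matrix_(r < N, t < N)
          ('X_(lshift N r) ^+ (nth (0%N, 0%N) (cells mu) t).1 *
           'X_(rshift N r) ^+ (nth (0%N, 0%N) (cells mu) t).2)).

(* the monomial  x_{n+1}^{a_1} y_{n+1}^{b_1} ... x_{n+k}^{a_k} y_{n+k}^{b_k},
   where d s = (a_{s+1}, b_{s+1}) *)
Definition dmon (n k : nat) (d : 'I_k -> nat * nat) : 'X_{1..(n + k) + (n + k)} :=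
  [multinom (if (i < n + k)%N then
               (if n <= i then (odflt (0, 0) (omap d (insub (i - n)))).1 else 0)%N
             else
               (if n <= i - (n + k) then
                  (odflt (0, 0) (omap d (insub (i - (n + k) - n)))).2 else 0)%N)
            | i < (n + k) + (n + k)].

Definition diffop {M : nat} (P Q : {mpoly rat[M]}) : {mpoly rat[M]} :=
  \sum_(m <- msupp P) P@_m *: mderivm m Q.

Definition in_IR {M : nat} (R P : {mpoly rat[M]}) : Prop :=
  forall m : 'X_{1..M}, diffop P (mderivm m R) = 0.

(* P belongs to the subring Q[X_n, Y_n] of Q[X_N, Y_N] *)
Definition small (n : nat) {N : nat} (P : {mpoly rat[N + N]}) : Prop :=
  forall m, m \in msupp P -> forall i : 'I_(N + N), m i != 0%N ->
    if (i < N)%N then (i < n)%N else (i - N < n)%N.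

(* fillings: f t = cell containing the label t+1 (t < n); W = white cells *)
Definition is_filling (n k : nat) (mu : seq nat) (i j : nat)
    (f : nat -> nat * nat) : Prop :=
  exists W : seq (nat * nat),
    [/\ [/\ uniq W, size W = k & all (shadow mu i j) W],
        (forall t, (t < n)%N -> cell_in mu (f t) /\ f t \notin W),
        (forall t u, (t < n)%N -> (u < n)%N -> f t = f u -> t = u) &
        (forall c, cell_in mu c -> c \notin W -> exists2 t, (t < n)%N & f t = c)].

(* the point (a(T), b(T)) (other coordinates set to 0; irrelevant on Q[X_n,Y_n]) *)
Definition fpoint (n : nat) {N : nat} (alpha beta : nat -> rat) (f : nat -> nat * nat)
    (i : 'I_(N + N)) : rat :=
  if (i < N)%N then (if (i < n)%N then alpha (f i).1 else 0)
  else (if (i - N < n)%N then beta (f (i - N)%N).2 else 0).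

Definition in_J (n k : nat) (mu : seq nat) (i j : nat) (alpha beta : nat -> rat)
    (P : {mpoly rat[(n + k) + (n + k)]}) : Prop :=
  small n P /\
  forall f, is_filling n k mu i j f -> P.@[fpoint n alpha beta f] = 0.

Definition topcomp {M : nat} (g : {mpoly rat[M]}) : {mpoly rat[M]} :=
  \sum_(m <- msupp g | mdeg m == (msize g).-1) g@_m *: 'X_[m].

Definition in_Ik (n k : nat) (mu : seq nat) (i j : nat) (alpha beta : nat -> rat)
    (P : {mpoly rat[(n + k) + (n + k)]}) : Prop :=
  exists (p : nat) (c g : 'I_p -> {mpoly rat[(n + k) + (n + k)]}),
    [/\ forall s, small n (c s),
        forall s, in_J n k mu i j alpha beta (g s) &
        P = \sum_(s < p) c s * topcomp (g s)].

(* Write [mpair phi P] for the pairing sum_u P_u phi(u) of a polynomial with a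
   family of coefficients. Every monomial occurring in Delta_mu is obtained by
   permuting the cells of mu among the variables, so all of them have the same
   factorial weight; hence P(partial) kills every derivative of partial^d Delta_mu
   as soon as P pairs to zero with each shifted coefficient family
   u |-> [Delta_mu]_(d + K + u). By linearity, and because Delta_mu is
   homogeneous, it suffices to check this for an element g of J_{rho^k} in place
   of its top component.

   Each coefficient of g is a multivariate divided difference of g on the grid
   of nodes (alpha_a, beta_b), so the pairing becomes a sum over grid points of
   the value of g, times Newton products coming from the shift d, times the
   determinant of a matrix of divided-difference weights coming from the
   alternating sum defining Delta_mu. A grid point assigns a (row, column) to
   each of the n + k variables; the determinant vanishes unless these are
   distinct cells of mu, and the Newton products vanish unless the last k of
   them dominate the cells of d, hence lie in the shadow.
   The surviving grid points are exactly the points of rho^k, where g vanishes. *)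

From HB Require Import structures.
From mathcomp Require Import all_boot all_order all_algebra.
From mathcomp Require Import ssrcomplements mpoly.
From mathcomp Require Import ring perm.
Set Implicit Arguments. Unset Strict Implicit. Unset Printing Implicit Defensive.
Import GRing.Theory Num.Theory.

(** * Ferrers diagrams *)

Definition cell_le (c c' : nat * nat) : bool := (c.1 <= c'.1)%N && (c.2 <= c'.2)%N.

Section FerrersDiagram.
Variable mu : seq nat.
Hypothesis mu_part : is_partition mu.

Lemma nth_partition_le a a' : (a' <= a)%N -> (a < size mu)%N ->
  (nth 0%N mu a <= nth 0%N mu a')%N.
Proof.
case/andP: mu_part => mu_sorted _ le_a'a lt_a.
have geq_trans : transitive geq by move=> x y z /= h1 h2; apply: leq_trans h1.
apply: (sorted_leq_nth geq_trans (fun x => leqnn x)) => //; rewrite inE //.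
exact: leq_ltn_trans lt_a.
Qed.

Lemma cell_in_le c c' : cell_in mu c -> cell_le c' c -> cell_in mu c'.
Proof.
move=> /andP [lt_a lt_b] /andP [le_a le_b]; apply/andP; split.
  exact: leq_ltn_trans lt_a.
exact: leq_trans (leq_ltn_trans le_b lt_b) (nth_partition_le le_a lt_a).
Qed.

Lemma cell_in_col_lt_head c : cell_in mu c -> (c.2 < head 0%N mu)%N.
Proof.
move=> /andP [lt_a lt_b]; rewrite -nth0.
exact: leq_trans lt_b (nth_partition_le (leq0n _) lt_a).
Qed.

(* Past the end, [nth] returns the corner (0,0), which lies in any nonempty diagram. *)
Lemma cell_in_nth_cells c t : cell_in mu c -> cell_in mu (nth (0%N, 0%N) (cells mu) t).
Proof.
move=> c_in; have [lt_t|le_t] := ltnP t (size (cells mu)).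
  by have := mem_nth (0%N, 0%N) lt_t; rewrite mem_filter => /andP [].
by rewrite nth_default //; apply: cell_in_le c_in _; rewrite /cell_le !leq0n.
Qed.

End FerrersDiagram.

Definition diagram (mu : seq nat) : seq (nat * nat) :=
  [seq (a, b) | a <- iota 0 (size mu), b <- iota 0 (nth 0%N mu a)].

Lemma size_diagram mu : size (diagram mu) = sumn mu.
Proof.
rewrite size_allpairs_dep -[in RHS](mkseq_nth 0%N mu).
by congr sumn; apply: eq_map => a; rewrite size_iota.
Qed.

Lemma mem_diagram mu c : (c \in diagram mu) = cell_in mu c.
Proof.
case: c => a b; apply/allpairsPdep/andP => [[a' [b' []]]|[/= lt_a lt_b]].
  by rewrite !mem_iota /= => lt_a lt_b [-> ->].
by exists a, b; rewrite !mem_iota.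
Qed.

Lemma injective_cells_onto N mu (cz : 'I_N -> nat * nat) :
  sumn mu = N -> injective cz -> (forall r, cell_in mu (cz r)) ->
  forall c, cell_in mu c -> exists r, cz r = c.
Proof.
move=> sum_mu cz_inj cz_in c c_in.
have sub : {subset [seq cz r | r <- enum 'I_N] <= diagram mu}.
  by move=> x /mapP [r _ ->]; rewrite mem_diagram.
have size_le : (size (diagram mu) <= size [seq cz r | r <- enum 'I_N])%N.
  by rewrite size_map size_enum_ord size_diagram sum_mu.
have cz_uniq : uniq [seq cz r | r <- enum 'I_N] by rewrite map_inj_uniq ?enum_uniq.
have [_ /(_ c)] := uniq_min_size cz_uniq sub size_le.
by rewrite mem_diagram c_in => /mapP [r _ ->]; exists r.
Qed.

Local Open Scope ring_scope.

(** * Divided differences *)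

Section DividedDifference.
Variables (F : fieldType) (nu : nat -> F).

Definition lagrange_denom (p a : nat) : F := \prod_(a' < p.+1 | a' != a :> nat) (nu a - nu a').

Definition ddiff_weight (p a : nat) : F := if (a <= p)%N then (lagrange_denom p a)^-1 else 0.

Definition newton_prod (l a : nat) : F := \prod_(a' < l) (nu a - nu a').

Lemma newton_prod_eq0 l a : (a < l)%N -> newton_prod l a = 0.
Proof. by move=> lt_al; rewrite /newton_prod (bigD1 (Ordinal lt_al)) //= subrr mul0r. Qed.

Lemma ddiff_weight_eq0 p a : (p < a)%N -> ddiff_weight p a = 0.
Proof. by rewrite /ddiff_weight ltnNge => /negPf ->. Qed.

Variable p : nat.
Hypothesis nu_inj : forall a b, (a < p.+1)%N -> (b < p.+1)%N -> nu a = nu b -> a = b.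

Let lagrange_poly (a : 'I_p.+1) : {poly F} :=
  \prod_(a' < p.+1 | a' != a :> nat) ('X - (nu a')%:P).

Let size_lagrange_poly a : size (lagrange_poly a) = p.+1.
Proof.
rewrite /lagrange_poly -big_filter size_prod_XsubC size_filter -sum1_count sum1_card.
by rewrite (@eq_card _ _ (predC1 a)) ?cardC1 ?card_ord.
Qed.

Let lagrange_poly_sample a (b : 'I_p.+1) :
  (lagrange_poly a).[nu b] = if a == b then lagrange_denom p a else 0.
Proof.
rewrite /lagrange_poly horner_prod; case: eqP => [->|/eqP neq_ab].
  by apply: eq_bigr => a' _; rewrite hornerXsubC.
rewrite (bigD1 b) /= ?hornerXsubC ?subrr ?mul0r //.
by rewrite eq_sym; apply: contra neq_ab => /eqP/val_inj ->.
Qed.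

Let lagrange_denom_neq0 (a : 'I_p.+1) : lagrange_denom p a != 0.
Proof.
apply/prodf_neq0 => a' neq_a'a; rewrite subr_eq0; apply: contra neq_a'a => /eqP eq_nu.
by rewrite (nu_inj (ltn_ord a) (ltn_ord a') eq_nu).
Qed.

(* The [p]-th divided difference of a polynomial of degree at most [p] is its
   coefficient of ['X^p]: compare [f] with its Lagrange interpolant. *)
Lemma ddiff_poly (f : {poly F}) : (size f <= p.+1)%N ->
  \sum_(a < p.+1) f.[nu a] * ddiff_weight p a = f`_p.
Proof.
move=> size_f; pose g := \sum_(a < p.+1) (f.[nu a] / lagrange_denom p a) *: lagrange_poly a.
have g_sample (b : 'I_p.+1) : g.[nu b] = f.[nu b].
  rewrite horner_sum (bigD1 b) //= big1 ?addr0 => [|a neq_ab].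
    by rewrite hornerZ lagrange_poly_sample eqxx (mulfVK (lagrange_denom_neq0 b)).
  by rewrite hornerZ lagrange_poly_sample (negPf neq_ab) mulr0.
have f_eq_g : f = g.
  apply/eqP; rewrite -subr_eq0; apply/eqP.
  apply: (@roots_geq_poly_eq0 _ _ [seq nu (val a) | a <- enum 'I_p.+1]).
  - by apply/allP => x /mapP [b _ ->]; rewrite /root hornerD hornerN g_sample subrr.
  - rewrite map_inj_uniq ?enum_uniq // => a b eq_nu.
    exact/val_inj/(nu_inj (ltn_ord a) (ltn_ord b) eq_nu).
  - rewrite size_map size_enum_ord (leq_trans (size_polyD _ _)) // geq_max size_f.
    rewrite size_polyN (leq_trans (size_sum _ _ _)) //.
    apply/bigmax_leqP => a _.
    by rewrite (leq_trans (size_scale_leq _ _)) // size_lagrange_poly.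
rewrite [in RHS]f_eq_g coef_sum; apply: eq_bigr => a _.
have /monicP : lagrange_poly a \is monic by apply: monic_prod_XsubC.
rewrite lead_coefE size_lagrange_poly => coef_p.
by rewrite coefZ coef_p mulr1 /ddiff_weight -ltnS ltn_ord.
Qed.

(* [newton_prod l a * nu a ^+ e] is the value at [nu a] of a monic polynomial
   of degree [l + e]. *)
Lemma ddiff_newton_prodX l e B : (p < B)%N -> (l + e <= p)%N ->
  \sum_(a < B) ddiff_weight p a * newton_prod l a * nu a ^+ e = ((l + e)%N == p)%:R.
Proof.
move=> lt_pB le_lep; pose f : {poly F} := (\prod_(a' < l) ('X - (nu a')%:P)) * 'X^e.
have monic_f : f \is monic by rewrite monicMr ?monicXn ?monic_prod_XsubC.
have size_f : size f = (l + e).+1.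
  rewrite size_monicM ?monic_prod_XsubC ?monic_neq0 ?monicXn //.
  by rewrite -big_enum size_prod_XsubC size_enum_ord size_polyXn addnS.
have coef_f : f`_p = ((l + e)%N == p)%:R.
  have [<-|neq_lep] := eqVneq (l + e)%N p.
    by move/monicP: monic_f; rewrite lead_coefE size_f.
  by rewrite nth_default // size_f ltn_neqAle neq_lep.
rewrite -coef_f -ddiff_poly ?size_f //.
rewrite (bigID (fun a : 'I_B => (a < p.+1)%N)) /= [X in _ + X]big1 ?addr0; last first.
  by move=> a; rewrite -leqNgt => /ddiff_weight_eq0 ->; rewrite !mul0r.
rewrite -(big_ord_widen _ (fun a => ddiff_weight p a * newton_prod l a * nu a ^+ e) lt_pB).
apply: eq_bigr => a _; rewrite /f hornerM horner_prod hornerXn /newton_prod.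
under [in RHS]eq_bigr => a' _ do rewrite hornerXsubC.
by rewrite [RHS]mulrC mulrA.
Qed.
End DividedDifference.

Lemma lepm_mdeg_eq M (m x : 'X_{1..M}) : (m <= x)%MM -> (mdeg x <= mdeg m)%N -> x = m.
Proof.
move=> le_mx; rewrite -{1}(submK le_mx) mdegD -{2}[mdeg m]add0n leq_add2r leqn0.
by rewrite mdeg_eq0 => /eqP eq0; rewrite -(submK le_mx) eq0 add0m.
Qed.

Lemma mdeg_le_mnm_lt M (x m : 'X_{1..M}) :
  (mdeg x <= mdeg m)%N -> x != m -> exists i, (x i < m i)%N.
Proof.
move=> le_deg neq_xm; apply/existsP; apply: contraR neq_xm.
rewrite negb_exists => /forallP no_lt; apply/eqP/lepm_mdeg_eq => //.
by apply/mnm_lepP => i; rewrite leqNgt no_lt.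
Qed.

Lemma prod_mnm_indicator (F : fieldType) M (x m : 'X_{1..M}) (G : 'I_M -> F) :
  (mdeg x <= mdeg m)%N -> (forall i, (x i <= m i)%N -> G i = (x i == m i)%:R) ->
  \prod_i G i = (x == m)%:R.
Proof.
move=> le_deg G_eq; have [eq_xm|neq_xm] := eqVneq x m.
  by rewrite big1 // => i _; rewrite G_eq eq_xm ?eqxx.
have [i lt_i] := mdeg_le_mnm_lt le_deg neq_xm.
by rewrite (bigD1 i) //= G_eq ?(ltnW lt_i) // ltn_eqF // mul0r.
Qed.

(* The tensor product over the coordinates of [ddiff_newton_prodX]: the grid
   sum extracts the coefficient of [g] at [m - l - K]. *)
Lemma mddiff_meval (F : fieldType) M B (nu : 'I_M -> nat -> F) (m l K : 'X_{1..M})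
    (g : {mpoly F[M]}) :
  (forall i, (m i < B)%N) ->
  (forall i a b, (a < (m i).+1)%N -> (b < (m i).+1)%N -> nu i a = nu i b -> a = b) ->
  (forall u, u \in msupp g -> (mdeg l + mdeg K + mdeg u <= mdeg m)%N) ->
  \sum_(z : {ffun 'I_M -> 'I_B})
     (\prod_i (ddiff_weight (nu i) (m i) (z i) * newton_prod (nu i) (l i) (z i) *
               nu i (z i) ^+ K i)) * g.@[fun i => nu i (z i)]
  = \sum_(u <- msupp g) g@_u * ((l + K + u)%MM == m)%:R.
Proof.
move=> lt_mB nu_inj deg_g.
under eq_bigr => z _ do rewrite mevalE mulr_sumr.
rewrite exchange_big /=; apply: eq_big_seq => u u_g.
under eq_bigr => z _ do rewrite mulrCA -big_split /=.
rewrite -mulr_sumr; congr (_ * _).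
rewrite -(bigA_distr_bigA (fun i (a : 'I_B) => ddiff_weight (nu i) (m i) a *
  newton_prod (nu i) (l i) a * nu i a ^+ K i * nu i a ^+ u i)) /=.
apply: prod_mnm_indicator => [|i]; first by rewrite !mdegD deg_g.
rewrite !mnmDE => le_i.
under eq_bigr => a _ do rewrite -mulrA -exprD.
by rewrite ddiff_newton_prodX ?addnA //; apply: nu_inj.
Qed.

(** * Pairing polynomials with coefficient families *)

Section CoefPairing.
Variables (R : comNzRingType) (M : nat).
Implicit Types (P Q : {mpoly R[M]}) (phi psi : 'X_{1..M} -> R).

Definition mpair phi P : R := \sum_(u <- msupp P) P@_u * phi u.

Lemma mpairwE phi P b : (msize P <= b)%N ->
  mpair phi P = \sum_(u : 'X_{1..M < b}) P@_u * phi u.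
Proof.
move=> le_Pb; rewrite /mpair (big_mksub 'X_{1..M < b}) ?msupp_uniq //=; last first.
  by move=> u /msize_mdeg_lt /leq_trans; apply.
by rewrite big_rmcond //= => u /memN_msupp_eq0 ->; rewrite mul0r.
Qed.

Lemma mpair_is_scalar phi : scalar (mpair phi).
Proof.
move=> c P Q; pose b := (msize P + msize Q)%N.
have le_Pb : (msize P <= b)%N by apply: leq_addr.
have le_Qb : (msize Q <= b)%N by apply: leq_addl.
have le_cPQb : (msize (c *: P + Q) <= b)%N.
  by rewrite (leq_trans (msizeD_le _ _)) // geq_max (leq_trans (msizeZ_le _ _)).
rewrite !(@mpairwE phi _ b) // mulr_sumr -big_split /=.
by apply: eq_bigr => u _; rewrite mcoeffD mcoeffZ mulrDl mulrA.
Qed.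

HB.instance Definition _ phi :=
  GRing.isLinear.Build R {mpoly R[M]} R *%R (mpair phi) (mpair_is_scalar phi).

Lemma eq_mpair phi psi P : phi =1 psi -> mpair phi P = mpair psi P.
Proof. by move=> eq_phi; apply: eq_bigr => u _; rewrite eq_phi. Qed.

Lemma mpairX phi v : mpair phi 'X_[v] = phi v.
Proof. by rewrite /mpair msuppX big_seq1 mcoeffX eqxx mul1r. Qed.

Lemma mpairXM phi v P : mpair phi ('X_[v] * P) = mpair (fun u => phi (v + u)%MM) P.
Proof.
rewrite /mpair -commr_mpolyX (perm_big _ (msuppMX P v)) big_map.
by apply: eq_bigr => u _; rewrite mcoeffMX.
Qed.

Lemma mpairM phi P Q :
  mpair phi (P * Q) = \sum_(v <- msupp P) P@_v * mpair (fun u => phi (v + u)%MM) Q.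
Proof.
rewrite {1}[P]mpolyE mulr_suml raddf_sum; apply: eq_bigr => v _.
by rewrite -scalerAl /= linearZ /= mpairXM.
Qed.

Definition mfact (m : 'X_{1..M}) : nat := \prod_(i < M) (m i)`!.

Lemma mfact_gt0 m : (0 < mfact m)%N.
Proof. by rewrite prodn_gt0 // => i; rewrite fact_gt0. Qed.

Lemma mcoeff_mderivm_mfact P m e : (P^`M[m])@_e *+ mfact e = P@_(m + e) *+ mfact (m + e).
Proof.
rewrite mcoeff_mderivm -mulrnA /mfact -big_split /=; congr (_ *+ _).
apply: eq_bigr => i _; rewrite mnmDE.
by have := ffact_fact (leq_addr (e i) (m i)); rewrite addKn.
Qed.

End CoefPairing.

Section RationalCoefficients.
Variable M : nat.
Implicit Types (P D : {mpoly rat[M]}) (phi : 'X_{1..M} -> rat).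

Lemma mpair_topcomp phi P :
  mpair phi (topcomp P) = \sum_(u <- msupp P | mdeg u == (msize P).-1) P@_u * phi u.
Proof. by rewrite raddf_sum; apply: eq_bigr => u _; rewrite /= linearZ /= mpairX. Qed.

(* If the shift [m] brings the top degree of [g] to the degree of [D], only the
   top component of [g] sees [D]; otherwise the top component pairs to zero. *)
Lemma mpair_topcomp_homog D g (m : 'X_{1..M}) deg :
  (forall e, mdeg e != deg -> D@_e = 0) ->
  ((forall u, u \in msupp g -> (mdeg m + mdeg u <= deg)%N) ->
     mpair (fun u => D@_(m + u)%MM) g = 0) ->
  mpair (fun u => D@_(m + u)%MM) (topcomp g) = 0.
Proof.
move=> D_homog pair_g; rewrite mpair_topcomp.
have le_top u : u \in msupp g -> (mdeg u <= (msize g).-1)%N.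
  by move/msize_mdeg_lt => lt_u; rewrite -ltnS prednK // (leq_ltn_trans _ lt_u).
have [eq_deg|neq_deg] := eqVneq (mdeg m + (msize g).-1)%N deg; last first.
  by rewrite big1_seq // => u /andP [/eqP eq_u _]; rewrite D_homog ?mulr0 // mdegD eq_u.
rewrite -[RHS](pair_g _) => [|u /le_top]; last by rewrite -eq_deg leq_add2l.
rewrite [LHS]big_mkcond /=; apply: eq_big_seq => u _.
case: eqP => // /eqP neq_u; rewrite D_homog ?mulr0 // mdegD -eq_deg eqn_add2l.
by rewrite neq_u.
Qed.

(* The coefficient of [e] in [P(partial) (D^`M[m])] is [C / e!] times the
   pairing below, since all monomials of [D] have factorial weight [C]. *)
Lemma diffop_mderivm_eq0 P D m C :
  (forall e, D@_e != 0 -> mfact e = C) ->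
  (forall e, mpair (fun u => D@_(m + e + u)%MM) P = 0) ->
  diffop P (D^`M[m]) = 0.
Proof.
move=> mfact_supp pairing_eq0; apply/mpolyP => e; rewrite mcoeff0.
have mfact_e_neq0 : (mfact e)%:R != 0 :> rat by rewrite pnatr_eq0 -lt0n mfact_gt0.
apply: (mulIf mfact_e_neq0); rewrite mul0r /diffop raddf_sum mulr_suml /=.
transitivity (\sum_(u <- msupp P) P@_u * D@_(m + e + u)%MM * C%:R).
  apply: eq_bigr => u _; rewrite mcoeffZ -!mulrA !mulr_natr -mderivmDm.
  rewrite mcoeff_mderivm_mfact -addmA [(u + e)%MM]addmC addmA.
  have [->|neq0] := eqVneq (D@_(m + e + u)%MM) 0; first by rewrite !mul0rn.
  by rewrite mfact_supp.
by rewrite -big_distrl /= -[X in X * _]/(mpair _ P) pairing_eq0 mul0r.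
Qed.

End RationalCoefficients.

(** * The determinant Delta_mu on the grid *)

Lemma big_ord_addnn (R : Type) (idx : R) (op : Monoid.com_law idx) N (F : 'I_(N + N) -> R) :
  \big[op/idx]_ii F ii = \big[op/idx]_r op (F (lshift N r)) (F (rshift N r)).
Proof. by rewrite big_split_ord big_split. Qed.

Section CellDeterminant.
Variables (N : nat) (c : 'I_N -> nat * nat).

Definition cell_mx : 'M[{mpoly rat[N + N]}]_N :=
  \matrix_(r < N, t < N) ('X_(lshift N r) ^+ (c t).1 * 'X_(rshift N r) ^+ (c t).2).

(* The exponent of the term of [\det cell_mx] indexed by [s]: variable [r]
   receives the cell [c (s r)]. *)
Definition perm_mnm (s : 'S_N) : 'X_{1..N + N} :=
  [multinom match split ii with inl r => (c (s r)).1 | inr r => (c (s r)).2 end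
  | ii < N + N].

Lemma perm_mnm_lshift s r : perm_mnm s (lshift N r) = (c (s r)).1.
Proof. by rewrite mnmE (unsplitK (inl r)). Qed.

Lemma perm_mnm_rshift s r : perm_mnm s (rshift N r) = (c (s r)).2.
Proof. by rewrite mnmE (unsplitK (inr r)). Qed.

Definition cell_deg : nat := \sum_t ((c t).1 + (c t).2).
Definition cell_fact : nat := \prod_t ((c t).1`! * (c t).2`!).

Lemma mdeg_perm_mnm s : mdeg (perm_mnm s) = cell_deg.
Proof.
rewrite mdegE big_ord_addnn; under eq_bigr => r _ do rewrite perm_mnm_lshift perm_mnm_rshift.
by rewrite [RHS](reindex_inj (@perm_inj _ s)).
Qed.

Lemma mfact_perm_mnm s : mfact (perm_mnm s) = cell_fact.
Proof.
rewrite /mfact big_ord_addnn; under eq_bigr => r _ do rewrite perm_mnm_lshift perm_mnm_rshift.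
by rewrite [RHS](reindex_inj (@perm_inj _ s)).
Qed.

Lemma mcoeff_det_cell_mx m :
  (\det cell_mx)@_m = \sum_(s : 'S_N) (-1) ^+ s * (perm_mnm s == m)%:R.
Proof.
rewrite raddf_sum; apply: eq_bigr => s _.
have -> : \prod_r cell_mx r (s r) = 'X_[perm_mnm s].
  rewrite mpolyXE_id big_ord_addnn; apply: eq_bigr => r _.
  by rewrite mxE perm_mnm_lshift perm_mnm_rshift.
by rewrite /= -(rmorph_sign (@mpolyC _ rat)) mul_mpolyC mcoeffZ mcoeffX.
Qed.

Lemma mcoeff_det_cell_mx_eq0 m : mdeg m != cell_deg -> (\det cell_mx)@_m = 0.
Proof.
move=> neq_deg; rewrite mcoeff_det_cell_mx big1 // => s _.
by case: eqP => [eq_m|]; [move: neq_deg; rewrite -eq_m mdeg_perm_mnm eqxx | rewrite mulr0].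
Qed.

Lemma mfact_supp_det_cell_mx m : (\det cell_mx)@_m != 0 -> mfact m = cell_fact.
Proof.
rewrite mcoeff_det_cell_mx => neq0.
have [s /eqP <-] : exists s, perm_mnm s == m.
  apply/existsP; apply: contraR neq0; rewrite negb_exists => /forallP no_s.
  by apply/eqP/big1 => s _; rewrite (negPf (no_s s)) mulr0.
exact: mfact_perm_mnm.
Qed.

End CellDeterminant.

Section GridExpansion.
Variables (N : nat) (c : 'I_N -> nat * nat) (alpha beta : nat -> rat) (h w : nat).
Hypothesis c_row_lt : forall t, ((c t).1 < h)%N.
Hypothesis c_col_lt : forall t, ((c t).2 < w)%N.
Hypothesis alpha_inj : forall a b, (a < h)%N -> (b < h)%N -> alpha a = alpha b -> a = b.
Hypothesis beta_inj : forall a b, (a < w)%N -> (b < w)%N -> beta a = beta b -> a = b.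
Variable l : 'X_{1..N + N}.
Local Notation B := (h + w)%N.

Definition nodes (ii : 'I_(N + N)) : nat -> rat := if (ii < N)%N then alpha else beta.

Lemma nodes_lshift r : nodes (lshift N r) = alpha.
Proof. by rewrite /nodes /= ltn_ord. Qed.

Lemma nodes_rshift r : nodes (rshift N r) = beta.
Proof. by rewrite /nodes /= ltnNge leq_addr. Qed.

Implicit Types (z : {ffun 'I_(N + N) -> 'I_B}) (K : 'X_{1..N + N}).

Definition grid_point z ii : rat := nodes ii (z ii).

Definition grid_cell z r : nat * nat := (z (lshift N r) : nat, z (rshift N r) : nat).

Definition ddiff_mx z : 'M[rat]_N := \matrix_(r, t)
  (ddiff_weight alpha (c t).1 (grid_cell z r).1 * ddiff_weight beta (c t).2 (grid_cell z r).2).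

Definition newton_factor z K r : rat :=
  newton_prod alpha (l (lshift N r)) (grid_cell z r).1 *
    alpha (grid_cell z r).1 ^+ K (lshift N r) *
  (newton_prod beta (l (rshift N r)) (grid_cell z r).2 *
    beta (grid_cell z r).2 ^+ K (rshift N r)).

Lemma alternating_grid_weight z K :
  \sum_(s : 'S_N) (-1) ^+ s * \prod_ii (ddiff_weight (nodes ii) (perm_mnm c s ii) (z ii) *
        newton_prod (nodes ii) (l ii) (z ii) * nodes ii (z ii) ^+ K ii)
  = (\prod_r newton_factor z K r) * \det (ddiff_mx z).
Proof.
rewrite mulr_sumr; apply: eq_bigr => s _; rewrite mulrCA; congr (_ * _).
rewrite big_ord_addnn -big_split /=; apply: eq_bigr => r _.
by rewrite perm_mnm_lshift perm_mnm_rshift nodes_lshift nodes_rshift mxE /newton_factor; ring.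
Qed.

Lemma perm_mnm_lt s ii : (perm_mnm c s ii < B)%N.
Proof.
rewrite -[ii]splitK; case: (split ii) => r /=.
  by rewrite perm_mnm_lshift ltn_addr.
by rewrite perm_mnm_rshift ltn_addl.
Qed.

Lemma nodes_inj_perm_mnm s ii a b :
  (a < (perm_mnm c s ii).+1)%N -> (b < (perm_mnm c s ii).+1)%N ->
  nodes ii a = nodes ii b -> a = b.
Proof.
rewrite -[ii]splitK; case: (split ii) => r /=.
  rewrite perm_mnm_lshift nodes_lshift => lt_a lt_b.
  exact: alpha_inj (leq_trans lt_a (c_row_lt _)) (leq_trans lt_b (c_row_lt _)).
rewrite perm_mnm_rshift nodes_rshift => lt_a lt_b.
exact: beta_inj (leq_trans lt_a (c_col_lt _)) (leq_trans lt_b (c_col_lt _)).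
Qed.

(* Each coefficient of [\det cell_mx] is an alternating sum of monomial
   indicators, and each indicator is a divided difference over the grid. *)
Lemma mcoeff_det_cell_mx_grid (g : {mpoly rat[N + N]}) K :
  (forall u, u \in msupp g -> (mdeg l + mdeg K + mdeg u <= cell_deg c)%N) ->
  \sum_(u <- msupp g) g@_u * (\det (cell_mx c))@_(l + K + u)
  = \sum_z g.@[grid_point z] * ((\prod_r newton_factor z K r) * \det (ddiff_mx z)).
Proof.
move=> deg_g; under eq_bigr => u _ do rewrite mcoeff_det_cell_mx mulr_sumr.
rewrite exchange_big /=.
under eq_bigr => s _.
  under eq_bigr => u _ do rewrite mulrCA eq_sym.
  rewrite -mulr_sumr -(mddiff_meval (perm_mnm_lt s) (@nodes_inj_perm_mnm s)); last first.
    by move=> u /deg_g; rewrite mdeg_perm_mnm.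
  rewrite mulr_sumr.
over.
rewrite exchange_big /=; apply: eq_bigr => z _.
rewrite -alternating_grid_weight mulr_sumr; apply: eq_bigr => s _.
by rewrite mulrA mulrC.
Qed.

End GridExpansion.

(** * Vanishing on the grid *)

Section Small.
Variables (n N : nat).
Implicit Types (P Q : {mpoly rat[N + N]}).

Lemma small0 : small n (0 : {mpoly rat[N + N]}).
Proof. by move=> m; rewrite msupp0. Qed.

Lemma smallD P Q : small n P -> small n Q -> small n (P + Q).
Proof. by move=> sP sQ m /msuppD_le; rewrite mem_cat => /orP []; [apply: sP | apply: sQ]. Qed.

Lemma smallM P Q : small n P -> small n Q -> small n (P * Q).
Proof.
move=> sP sQ m /msuppM_le /allpairsP [[m1 m2] [/= m1_P m2_Q ->]] ii.
rewrite mnmDE; have [m1_eq0|m1_neq0] := eqVneq (m1 ii) 0%N.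
  by rewrite m1_eq0; apply: sQ m2_Q ii.
by move=> _; apply: sP m1_P ii m1_neq0.
Qed.

Lemma small_topcomp P : small n P -> small n (topcomp P).
Proof.
move=> sP; rewrite /topcomp big_seq_cond.
apply: (big_ind (small n)) => [||u /andP [u_P _] m]; [exact: small0 | exact: smallD |].
by move=> /msuppZ_le; rewrite msuppX inE => /eqP ->; apply: sP.
Qed.

Lemma meval_small P (v v' : 'I_(N + N) -> rat) : small n P ->
  (forall ii : 'I_(N + N), (if (ii < N)%N then (ii < n)%N else (ii - N < n)%N) -> v ii = v' ii) ->
  P.@[v] = P.@[v'].
Proof.
move=> sP eq_v; rewrite !mevalE; apply: eq_big_seq => m m_P; congr (_ * _).
apply: eq_bigr => ii _; have [->|neq0] := eqVneq (m ii) 0%N; first by rewrite !expr0.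
by rewrite eq_v // (sP m m_P ii neq0).
Qed.

End Small.

Section Vanishing.
Variables (n k : nat) (mu : seq nat) (i j : nat) (alpha beta : nat -> rat).
Variable d : 'I_k -> nat * nat.
Local Notation N := (n + k)%N.
Local Notation B := (size mu + head 0%N mu)%N.
Hypothesis mu_part : is_partition mu.
Hypothesis sum_mu : sumn mu = N.
Hypothesis cell_ij : cell_in mu (i, j).
Hypothesis d_shadow : forall s, shadow mu i j (d s).

Definition mu_cell (t : 'I_N) : nat * nat := nth (0%N, 0%N) (cells mu) t.

Lemma cell_in_mu_cell t : cell_in mu (mu_cell t).
Proof. exact: cell_in_nth_cells cell_ij. Qed.

Lemma mu_cell_row_lt t : ((mu_cell t).1 < size mu)%N.
Proof. by case/andP: (cell_in_mu_cell t). Qed.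

Lemma mu_cell_col_lt t : ((mu_cell t).2 < head 0%N mu)%N.
Proof. exact: cell_in_col_lt_head (cell_in_mu_cell t). Qed.

Lemma dmon_lshift_rshift s : dmon n k d (lshift N (rshift n s)) = (d s).1.
Proof. by rewrite mnmE /= ltn_add2l ltn_ord leq_addr addKn valK. Qed.

Lemma dmon_rshift_rshift s : dmon n k d (rshift N (rshift n s)) = (d s).2.
Proof. by rewrite mnmE /= ltnNge leq_addr /= addKn leq_addr addKn valK. Qed.

Implicit Types (z : {ffun 'I_(N + N) -> 'I_B}) (K : 'X_{1..N + N}).
Local Notation grid_cell := (@grid_cell N (size mu) (head 0%N mu)).
Local Notation ddiff_mx := (ddiff_mx mu_cell alpha beta).
Local Notation newton_factor := (newton_factor alpha beta (dmon n k d)).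

Lemma det_ddiff_mx_out z r : ~~ cell_in mu (grid_cell z r) -> \det (ddiff_mx z) = 0.
Proof.
move=> out_r; rewrite (expand_det_row _ r) big1 // => t _; rewrite mxE.
have [le_row|lt_row] := leqP (grid_cell z r).1 (mu_cell t).1; last first.
  by rewrite ddiff_weight_eq0 // !mul0r.
have [le_col|lt_col] := leqP (grid_cell z r).2 (mu_cell t).2; last first.
  by rewrite (ddiff_weight_eq0 _ lt_col) mulr0 mul0r.
case/negP: out_r; apply: (cell_in_le mu_part (cell_in_mu_cell t)).
by apply/andP.
Qed.

Lemma det_ddiff_mx_dup z r1 r2 :
  r1 != r2 -> grid_cell z r1 = grid_cell z r2 -> \det (ddiff_mx z) = 0.
Proof.
by move=> neq_r eq_cell; apply: (determinant_alternate neq_r) => t; rewrite !mxE eq_cell.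
Qed.

Lemma newton_factor_below z K s :
  ~~ cell_le (d s) (grid_cell z (rshift n s)) -> newton_factor z K (rshift n s) = 0.
Proof.
rewrite /cell_le negb_and -!ltnNge /newton_factor dmon_lshift_rshift dmon_rshift_rshift.
by case/orP => lt_d; rewrite (newton_prod_eq0 _ lt_d) ?(mul0r, mulr0).
Qed.

Definition grid_filling z (t : nat) : nat * nat :=
  odflt (0%N, 0%N) (omap (grid_cell z) (insub t : option 'I_N)).

Lemma grid_fillingE z (t : 'I_n) : grid_filling z t = grid_cell z (lshift k t).
Proof.
rewrite /grid_filling (insubT (fun x => x < N)%N (ltn_addr k (ltn_ord t))) /=.
by congr (grid_cell z _); apply: val_inj.
Qed.

Lemma meval_fpoint_grid_filling z (g : {mpoly rat[N + N]}) : small n g ->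
  g.@[fpoint n alpha beta (grid_filling z)] = g.@[grid_point alpha beta z].
Proof.
move=> g_small; apply: meval_small g_small _ => ii; rewrite /fpoint /grid_point /nodes.
case: ifP => lt_iiN lt_n; rewrite lt_n.
  by rewrite (grid_fillingE z (Ordinal lt_n)); congr (alpha (val (z _))); apply: val_inj.
rewrite (grid_fillingE z (Ordinal lt_n)); congr (beta (val (z _))); apply: val_inj => /=.
by rewrite subnKC // leqNgt lt_iiN.
Qed.

Lemma grid_filling_is_filling z :
  (forall r, cell_in mu (grid_cell z r)) -> injective (grid_cell z) ->
  (forall s, cell_le (d s) (grid_cell z (rshift n s))) ->
  is_filling n k mu i j (grid_filling z).
Proof.
move=> cells_in cell_inj d_le.
have fillingE t (lt_tn : (t < n)%N) :
    grid_filling z t = grid_cell z (lshift k (Ordinal lt_tn)).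
  exact: grid_fillingE (Ordinal lt_tn).
exists [seq grid_cell z (rshift n s) | s <- enum 'I_k]; split.
- split; first by rewrite map_inj_uniq ?enum_uniq // => s1 s2 /cell_inj /rshift_inj.
    by rewrite size_map size_enum_ord.
  apply/allP => _ /mapP [s _ ->]; have /and3P [_ /= le_i le_j] := d_shadow s.
  case/andP: (d_le s) => le1 le2; apply/and3P; split => //.
    exact: leq_trans le_i le1.
  exact: leq_trans le_j le2.
- move=> t lt_tn; rewrite fillingE; split => //.
  by apply/mapP => -[s _ /cell_inj /eqP]; rewrite eq_lrshift.
- by move=> t u lt_tn lt_un; rewrite !fillingE => /cell_inj /lshift_inj [].
- move=> c c_in c_white; have [r eq_c] := injective_cells_onto sum_mu cell_inj cells_in c_in.
  rewrite -eq_c in c_white *.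
  case: (splitP r) => [t eq_r|s eq_r].
    exists (val t); first exact: ltn_ord.
    by rewrite grid_fillingE; congr (grid_cell z _); apply: val_inj.
  case/mapP: c_white; exists s; first by rewrite mem_enum.
  by congr (grid_cell z _); apply: val_inj.
Qed.

(* Either the determinant vanishes (a cell outside [mu], or a repeated cell),
   or a Newton factor vanishes (a white cell not dominating its cell of [d]),
   or the grid point is a point of [rho^k]. *)
Lemma grid_term_eq0 g z K : in_J n k mu i j alpha beta g ->
  g.@[grid_point alpha beta z] * ((\prod_r newton_factor z K r) * \det (ddiff_mx z)) = 0.
Proof.
case=> g_small g_J.
have [r out_r|cells_in] := pickP (fun r => ~~ cell_in mu (grid_cell z r)).
  by rewrite (det_ddiff_mx_out out_r) !mulr0.
have [r1 /existsP [r2 /andP [neq_r /eqP eq_cell]]|no_dup] :=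
  pickP (fun r1 => [exists r2, (r1 != r2) && (grid_cell z r1 == grid_cell z r2)]).
  by rewrite (det_ddiff_mx_dup neq_r eq_cell) !mulr0.
have [s below_s|d_le] := pickP (fun s => ~~ cell_le (d s) (grid_cell z (rshift n s))).
  by rewrite (bigD1 (rshift n s)) //= newton_factor_below // !mul0r mulr0.
have cell_inj : injective (grid_cell z).
  move=> r1 r2 eq_cell; apply/eqP; apply: contraFT (no_dup r1) => neq_r.
  by apply/existsP; exists r2; rewrite neq_r eq_cell eqxx.
have := grid_filling_is_filling (fun r => negbFE (cells_in r)) cell_inj
  (fun s => negbFE (d_le s)).
by move=> /g_J; rewrite meval_fpoint_grid_filling // => ->; rewrite mul0r.
Qed.

Hypothesis alpha_inj :
  forall a b, (a < size mu)%N -> (b < size mu)%N -> alpha a = alpha b -> a = b.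
Hypothesis beta_inj :
  forall a b, (a < head 0%N mu)%N -> (b < head 0%N mu)%N -> beta a = beta b -> a = b.

Lemma mpair_Delta_J_eq0 g K : in_J n k mu i j alpha beta g ->
  (forall u, u \in msupp g -> (mdeg (dmon n k d + K) + mdeg u <= cell_deg mu_cell)%N) ->
  mpair (fun u => (Delta N mu)@_(dmon n k d + K + u)) g = 0.
Proof.
move=> g_J deg_g; rewrite /mpair.
rewrite (mcoeff_det_cell_mx_grid mu_cell_row_lt mu_cell_col_lt alpha_inj beta_inj).
  by apply: big1 => z _; apply: grid_term_eq0.
by move=> u /deg_g; rewrite mdegD.
Qed.

Lemma mpair_Delta_Ik_eq0 P K : in_Ik n k mu i j alpha beta P ->
  mpair (fun u => (Delta N mu)@_(dmon n k d + K + u)) P = 0.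
Proof.
case=> p [c [g [_ g_J ->]]]; rewrite raddf_sum big1 // => s _.
rewrite /= mpairM big1_seq // => v _.
rewrite (@eq_mpair _ _ _ (fun u => (Delta N mu)@_(dmon n k d + (K + v) + u))) => [|u].
  rewrite (mpair_topcomp_homog (deg := cell_deg mu_cell)) ?mulr0 //.
    exact: mcoeff_det_cell_mx_eq0.
  exact: mpair_Delta_J_eq0.
by rewrite !addmA.
Qed.
End Vanishing.

Unset Implicit Arguments.

Theorem mainTheorem5 (n k : nat) (mu : seq nat) (i j : nat) (alpha beta : nat -> rat) :
  is_partition mu ->
  sumn mu = (n + k)%N ->
  cell_in mu (i, j) ->
  (forall a b, (a < size mu)%N -> (b < size mu)%N -> alpha a = alpha b -> a = b) ->
  (forall a b, (a < head 0%N mu)%N -> (b < head 0%N mu)%N -> beta a = beta b -> a = b) ->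
  forall P : {mpoly rat[(n + k) + (n + k)]},
    in_Ik n k mu i j alpha beta P ->
    small n P /\
    (forall d : 'I_k -> nat * nat,
       (forall s, shadow mu i j (d s)) ->
       (forall s t : 'I_k, (s < t)%N -> cell_lt (d s) (d t)) ->
       in_IR (mderivm (dmon n k d) (Delta (n + k) mu)) P).
Proof.
move=> mu_part sum_mu cell_ij alpha_inj beta_inj P P_Ik; split.
  case: P_Ik => p [c [g [c_small g_J ->]]].
  apply: (big_ind (small n)) => [||s _]; [exact: small0 | exact: smallD |].
  exact: smallM (c_small s) (small_topcomp (g_J s).1).
move=> d d_shadow _ m; rewrite -mderivmDm.
apply: (diffop_mderivm_eq0 (C := cell_fact (@mu_cell n k mu))).
  exact: mfact_supp_det_cell_mx.
move=> e; rewrite -addmA.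
exact: (mpair_Delta_Ik_eq0 mu_part sum_mu cell_ij d_shadow alpha_inj beta_inj).
Qed.
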